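(* There exists a constant $c>0$ such that for all $N$ large enough, all $n\in\mathbb{Z}_+$ and every initial law of $Y(0)$, a Markov chain $Y$ on $\{0,\dots,N-4\}$ with kernel $R$ satisfies $$\mathbb{P}[\tau_0^Y>n]\le e^{1-cn/N^3},\qquad \tau_0^Y=\inf\{n\in\mathbb{Z}_+: Y(n)=0\}.$$
   Context: $R$ is the birth–death Markov kernel on $\{0,\dots,N-4\}$ with $R(x,x-1)=\frac{x(N-x)}{N(N-1)}$, $R(x,x+1)=\frac{N-x-1}{N(N-1)}$ for $x\le N-5$, all other off-diagonal entries $0$, and diagonal entries making rows sum to 1. *)

From HB Require Import structures.
From mathcomp Require Import all_boot all_order all_algebra.
From mathcomp Require Import reals.
From mathcomp Require Import sequences exp.
Set Implicit Arguments. Unset Strict Implicit. Unset Printing Implicit Defensive.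
Import Order.TTheory GRing.Theory Num.Theory.
Local Open Scope ring_scope.

(* Birth-death kernel R on {0,...,N-4}, states encoded as naturals. *)
Definition down_rate {T : realType} (N x : nat) : T :=
  ((x * (N - x))%N)%:R / ((N * (N - 1))%N)%:R.
Definition up_rate {T : realType} (N x : nat) : T :=
  if (x <= N - 5)%N then ((N - x - 1)%N)%:R / ((N * (N - 1))%N)%:R else 0.

Definition Rker {T : realType} (N x y : nat) : T :=
  if x == y.+1 then down_rate N x
  else if y == x.+1 then up_rate N x
  else if x == y then 1 - down_rate N x - up_rate N x
  else 0.

(* P[tau_0^Y > n] for the chain Y with initial law mu and kernel Rker N on
   'I_(N-3) = {0,...,N-4}: total probability of paths Y(0..n) avoiding 0. *)
Definition prob_tau0_gt {T : realType} (N n : nat) (mu : {ffun 'I_(N - 3) -> T}) : T :=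
  \sum_(p : {ffun 'I_n.+1 -> 'I_(N - 3)} | [forall i, (p i != 0 :> nat)])
     mu (p ord0) *
     \prod_(i < n) Rker N (p (widen_ord (leqnSn n) i)) (p (lift ord0 i)).

From HB Require Import structures.
From mathcomp Require Import all_boot all_order all_algebra.
From mathcomp Require Import reals.
From mathcomp Require Import sequences exp.
From mathcomp Require Import zify ring lra.
Import Order.TTheory GRing.Theory Num.Theory.

Set Implicit Arguments.
Unset Strict Implicit.
Unset Printing Implicit Defensive.

(* Proof by a Foster-Lyapunov drift argument with h(y) = N + y.  For every
   state 1 <= x <= N-4 only the neighbours x-1, x, x+1 are reachable, and
     (R h)(x) = h(x) - d(x) + u(x) <= (1 - 1/N^3) h(x) =: lam h(x),
   which after clearing denominators is a polynomial inequality on nat.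
   Writing Q for R killed at 0 (mass sitting at 0 is discarded), the
   Markov property gives P_mu[tau_0 > n+1] = P_{mu Q}[tau_0 > n], and the
   drift gives E_{mu Q}[h] <= lam E_mu[h]; since h >= N,
     N P_mu[tau_0 > n] <= lam^n E_mu[h] <= lam^n 2N.
   Finally 2 (1 - 1/N^3)^n <= exp(1 - n/N^3), so the theorem holds with
   c = 1 and every N (for N <= 3 there is no probability law on the empty
   state space). *)

(* The total jump rate of R at a state x <= N-4 is at most 1 (numerators
   over the common denominator N(N-1)); this makes R a stochastic matrix. *)
Lemma rates_sum_le N x : (x < N - 3)%N ->
  (x * (N - x) + (N - x - 1) <= N * (N - 1))%N.
Proof.
move=> xN; have [m ->] : exists m, N = (x + 4 + m)%N by exists (N - 4 - x)%N; lia.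
have -> : (x + 4 + m - x = m + 4)%N by lia.
have -> : (x + 4 + m - 1 = x + 3 + m)%N by lia.
have -> : (m + 4 - 1 = m + 3)%N by lia.
nia.
Qed.

(* The drift inequality below divided by N, with M = N, x = y+1, N-x = a+1:
   the case y = 0 is tight up to 1, for y >= 1 the right side dominates. *)
Lemma drift_core M y a : (0 < M)%N ->
  ((M + y.+1) * (M - 1) + a * (M * M) <= y.+1 * a.+1 * (M * M))%N.
Proof.
move=> M0.
have sq_bound : ((M + y.+1) * (M - 1) <= M * M + y * M)%N.
  have [k ->] : exists k, M = k.+1 by exists M.-1; lia.
  by rewrite subSS subn0 !mulSn !mulnS !mulnDl; lia.
have lin_bound : (y * M <= y * a.+1 * (M * M))%N.
  rewrite -mulnA leq_mul2l; apply/orP; right.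
  exact: leq_trans (leq_pmulr M M0) (leq_pmull _ (ltn0Sn a)).
set Q := (M * M)%N.
have -> : (y.+1 * a.+1 * Q = a * Q + (Q + y * a.+1 * Q))%N.
  by rewrite mulSn mulnDl mulSn; lia.
lia.
Qed.

Lemma drift_nat N x : (0 < x)%N -> (x < N - 3)%N ->
  ((N + x) * (N * (N - 1)) + (N - x - 1) * N ^ 3 <= x * (N - x) * N ^ 3)%N.
Proof.
move=> x0 xN.
have [y [a [Ex Ea]]] : exists y a, x = y.+1 /\ N - x = a.+1
  by exists x.-1, (N - x).-1; lia.
have -> : (N - x - 1 = a)%N by lia.
have -> : ((N + x) * (N * (N - 1)) + a * N ^ 3
           = N * ((N + x) * (N - 1) + a * (N * N)))%N.
  by rewrite !expnS expn0 muln1; lia.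
have -> : (x * (N - x) * N ^ 3 = N * (x * a.+1 * (N * N)))%N.
  by rewrite Ea !expnS expn0 muln1; lia.
by rewrite leq_mul2l Ex drift_core ?orbT //; lia.
Qed.

Local Open Scope ring_scope.

Section RealFacts.
Variable T : realType.

Lemma ler_fracD (D K a b c : T) : 0 < D -> 0 < K ->
  a * D + b * K <= c * K -> a / K + b / D <= c / D.
Proof.
move=> D0 K0 H.
rewrite -subr_ge0.
have -> : c / D - (a / K + b / D) = (c * K - b * K - a * D) / (D * K).
  by field; rewrite lt0r_neq0 ?lt0r_neq0.
by apply: divr_ge0; [lra | apply: mulr_ge0; lra].
Qed.

Lemma sum_window (F : nat -> T) z K : (z.+3 <= K)%N ->
  (forall i, (i < z)%N -> F i = 0) -> (forall i, (z.+3 <= i)%N -> F i = 0) ->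
  \sum_(i < K) F i = F z + F z.+1 + F z.+2.
Proof.
move=> /subnKC <- Flo Fhi; elim: (K - z.+3)%N => [|k IH].
  rewrite addn0 !big_ord_recr /= big1 ?add0r // => i _; apply: Flo; exact: ltn_ord.
by rewrite addnS big_ord_recr /= IH (Fhi (z.+3 + k)%N) ?addr0 // leq_addr.
Qed.

Lemma geometric_le_expR (a : T) n : 0 <= a <= 1 ->
  2 * (1 - a) ^+ n <= expR (1 - n%:R * a).
Proof.
move=> /andP[a0 a1].
rewrite expRD -mulrN expRM_natl.
apply: ler_pM; rewrite ?exprn_ge0 ?subr_ge0 //.
  by have := expR_ge1Dx (1 : T); lra.
apply: lerXn2r; rewrite ?nnegrE ?subr_ge0 ?expR_ge0 //.
by have := expR_ge1Dx (- a); lra.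
Qed.

End RealFacts.

Section Kernel.
Variables (T : realType) (N : nat).

Local Notation D := ((N * (N - 1))%N%:R : T).
Local Notation K := (N%:R ^+ 3 : T).

Definition lyap (y : nat) : T := (N + y)%:R.
Definition lam : T := 1 - 1 / K.

(* The contraction factor is nonnegative (1/0 = 0 covers N = 0). *)
Lemma lam_ge0 : 0 <= lam.
Proof.
rewrite /lam subr_ge0 -natrX; case: (posnP (N ^ 3)) => [->|K0].
  by rewrite invr0 mulr0.
by rewrite ler_pdivrMr ?ltr0n // mul1r ler1n.
Qed.

Lemma denom_gt0 x : (x < N - 3)%N -> 0 < D.
Proof. by move=> xN; rewrite ltr0n; lia. Qed.

Lemma down_rate_ge0 x : 0 <= down_rate N x :> T.
Proof. exact: divr_ge0. Qed.

Lemma up_rate_le x : up_rate N x <= (N - x - 1)%N%:R / D :> T.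
Proof. by rewrite /up_rate; case: ifP => // _; exact: divr_ge0. Qed.

Lemma up_rate_ge0 x : 0 <= up_rate N x :> T.
Proof. by rewrite /up_rate; case: ifP => // _; exact: divr_ge0. Qed.

Lemma Rker_ge0 x y : (x < N - 3)%N -> 0 <= Rker N x y :> T.
Proof.
move=> xN; have D0 := denom_gt0 xN.
have rates_le1 : down_rate N x + up_rate N x <= 1 :> T.
  apply: le_trans (lerD (lexx _) (up_rate_le x)) _.
  by rewrite -mulrDl -natrD ler_pdivrMr // mul1r ler_nat rates_sum_le.
have := down_rate_ge0 x; have := up_rate_ge0 x.
by rewrite /Rker; do 3 case: ifP => _ //; lra.
Qed.

(* Row x+1 of R applied to f: only the neighbours x, x+1, x+2 contribute
   (at the top state the missing upward step has rate 0). *)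
Lemma Rker_row (f : nat -> T) x : (x.+1 < N - 3)%N ->
  \sum_(y < N - 3) Rker N x.+1 y * f y =
    down_rate N x.+1 * f x + (1 - down_rate N x.+1 - up_rate N x.+1) * f x.+1
    + up_rate N x.+1 * f x.+2.
Proof.
move=> xN; set F := fun y => Rker N x.+1 y * f y.
have Ffar y : (y < x)%N || (x.+3 <= y)%N -> F y = 0.
  by move=> Hy; rewrite /F /Rker; do 3 (case: eqP => [?|_]; first lia); rewrite mul0r.
have Ftop : F (N - 3)%N = 0.
  have [Etop|] := eqVneq (N - 3)%N x.+2; last by move=> ?; apply: Ffar; lia.
  rewrite /F /Rker Etop ifF ?eqxx; last by apply/eqP; lia.
  by rewrite /up_rate ifF ?mul0r //; apply/negbTE; rewrite -ltnNge; lia.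
have -> : \sum_(y < N - 3) F y = \sum_(y < (N - 3).+1) F y.
  by rewrite big_ord_recr /= Ftop addr0.
rewrite (@sum_window _ F x) /=; first last.
- by move=> i Hi; apply: Ffar; rewrite Hi orbT.
- by move=> i Hi; apply: Ffar; rewrite Hi.
- by [].
have [ne1 ne2] : (x.+1 == x.+2) = false /\ (x.+1 == x.+3) = false.
  by split; apply/eqP; lia.
by rewrite /F /Rker !eqxx ne1 ne2.
Qed.

Lemma lyap_drift x : (x.+1 < N - 3)%N ->
  \sum_(y < N - 3) Rker N x.+1 y * lyap y <= lam * lyap x.+1.
Proof.
move=> xN; rewrite Rker_row //.
set d := down_rate N x.+1; set u := up_rate N x.+1; set H := lyap x.+1.
have lyap_prev : lyap x = H - 1 by rewrite /H /lyap addnS -natr1 addrK.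
have lyap_next : lyap x.+2 = H + 1 by rewrite /H /lyap (addnS N x.+1) -natr1.
have K0 : 0 < K by rewrite exprn_gt0 // ltr0n; lia.
have rates : H / K + u <= d.
  apply: le_trans (lerD (lexx _) (up_rate_le _)) _.
  apply: ler_fracD; [exact: denom_gt0 xN | exact: K0 |].
  by rewrite -!natrX -!natrM -natrD ler_nat drift_nat.
rewrite lyap_prev lyap_next /lam.
have -> : d * (H - 1) + (1 - d - u) * H + u * (H + 1) = H - d + u by ring.
have -> : (1 - 1 / K) * H = H - H / K by ring.
lra.
Qed.

End Kernel.

Section KilledChain.
Variables (T : realType) (N : nat).
Local Notation S := 'I_(N - 3).

Definition killed_step (mu : {ffun S -> T}) : {ffun S -> T} :=
  [ffun y : S => \sum_(x : S | val x != 0%N) mu x * Rker N x y].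

Definition path_uncons n (q : {ffun 'I_n.+2 -> S}) : S * {ffun 'I_n.+1 -> S} :=
  (q ord0, [ffun j => q (lift ord0 j)]).
Definition path_cons n (xp : S * {ffun 'I_n.+1 -> S}) : {ffun 'I_n.+2 -> S} :=
  [ffun i : 'I_n.+2 => if val i is k.+1 then xp.2 (inord k) else xp.1].

Lemma path_uncons_bij n : bijective (@path_uncons n).
Proof.
exists (@path_cons n).
- move=> q; apply/ffunP => -[[|k] Hk]; rewrite ffunE /=.
    by congr (q _); apply: val_inj.
  by rewrite ffunE; congr (q _); apply: val_inj; rewrite /= inordK.
- move=> [x p]; rewrite /path_uncons ffunE; congr (_, _).
  by apply/ffunP => j; rewrite !ffunE /= inord_val.
Qed.

Lemma prob_tau0_gt_step n mu :
  @prob_tau0_gt T N n.+1 mu = @prob_tau0_gt T N n (killed_step mu).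
Proof.
rewrite /prob_tau0_gt.
under [RHS]eq_bigr do rewrite ffunE mulr_suml.
rewrite exchange_big /= pair_big_dep /=.
rewrite (reindex (@path_uncons n)) /=; last exact/onW_bij/path_uncons_bij.
apply: eq_big => [q|q _].
  apply/forallP/andP => [q0|[q00 /forallP q0] i].
    by split; [exact: q0 | apply/forallP => j; rewrite ffunE].
  case: i => [[|k] Hk].
    by congr (~~ (nat_of_ord (q _) == _)): q00; apply: val_inj.
  move: (q0 (Ordinal (Hk : (k < n.+1)%N))); rewrite ffunE.
  by congr (~~ (nat_of_ord (q _) == _)); apply: val_inj.
rewrite big_ord_recl -mulrA ffunE; congr (_ * (Rker N _ _ * _)).
  by congr (nat_of_ord (q _)); apply: val_inj.
by apply: eq_bigr => i _; rewrite !ffunE; congr (Rker N (nat_of_ord (q _)) _);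
  apply: val_inj.
Qed.

End KilledChain.

Section Lyapunov.
Variables (T : realType) (N : nat).
Local Notation S := 'I_(N - 3).

Definition lyap_mean (mu : {ffun S -> T}) : T := \sum_x mu x * lyap T N x.

Lemma killed_step_ge0 (mu : {ffun S -> T}) : (forall x, 0 <= mu x) ->
  forall y, 0 <= killed_step mu y.
Proof.
move=> mu0 y; rewrite ffunE; apply: sumr_ge0 => x _.
exact: mulr_ge0 (mu0 x) (Rker_ge0 _ _ (ltn_ord x)).
Qed.

Lemma lyap_mean_step (mu : {ffun S -> T}) : (forall x, 0 <= mu x) ->
  lyap_mean (killed_step mu) <= lam T N * lyap_mean mu.
Proof.
move=> mu0; rewrite /lyap_mean.
under eq_bigr do rewrite ffunE mulr_suml.
rewrite exchange_big /= mulr_sumr.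
apply: le_trans (_ : \sum_(x : S | val x != 0%N) lam T N * (mu x * lyap T N x) <= _).
  apply: ler_sum => -[[|x] xN] //= _.
  under eq_bigr do rewrite -mulrA.
  by rewrite -mulr_sumr mulrCA ler_wpM2l // lyap_drift.
rewrite big_mkcond /=; apply: ler_sum => x _.
case: ifP => // _; apply: mulr_ge0; first exact: lam_ge0.
exact: mulr_ge0 (mu0 x) (ler0n _ _).
Qed.

(* Since h >= N, N P[tau_0 > 0] is at most the mean of h. *)
Lemma prob_tau0_gt0_le (mu : {ffun S -> T}) : (forall x, 0 <= mu x) ->
  N%:R * @prob_tau0_gt T N 0 mu <= lyap_mean mu.
Proof.
move=> mu0; rewrite /prob_tau0_gt.
rewrite (reindex (fun x : S => [ffun _ : 'I_1 => x])); last first.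
  apply: onW_bij; exists (fun p : {ffun 'I_1 -> S} => p ord0) => [x|p].
    by rewrite ffunE.
  by apply/ffunP => i; rewrite ffunE [i]ord1.
rewrite mulr_sumr /lyap_mean big_mkcond /=; apply: ler_sum => x _.
rewrite big_ord0 mulr1 ffunE; case: ifP => [_|_].
  by rewrite mulrC ler_wpM2l // ler_nat leq_addr.
exact: mulr_ge0 (mu0 x) (ler0n _ _).
Qed.

Lemma prob_tau0_gt_le n (mu : {ffun S -> T}) : (forall x, 0 <= mu x) ->
  N%:R * @prob_tau0_gt T N n mu <= lam T N ^+ n * lyap_mean mu.
Proof.
elim: n mu => [|n IH] mu mu0; first by rewrite expr0 mul1r prob_tau0_gt0_le.
rewrite prob_tau0_gt_step; apply: le_trans (IH _ (killed_step_ge0 mu0)) _.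
rewrite exprSr -mulrA ler_wpM2l ?exprn_ge0 ?lam_ge0 //.
exact: lyap_mean_step.
Qed.

(* For a probability law, E_mu[h] <= 2N since h <= 2N on {0,...,N-4}. *)
Lemma lyap_mean_le (mu : {ffun S -> T}) : (forall x, 0 <= mu x) ->
  \sum_x mu x = 1 -> lyap_mean mu <= 2 * N%:R.
Proof.
move=> mu0 mu1; rewrite -[X in _ <= X]mul1r -[X in X * _]mu1 mulr_suml.
apply: ler_sum => x _; rewrite ler_wpM2l // /lyap -natrM ler_nat.
by have := ltn_ord x; lia.
Qed.

End Lyapunov.

Unset Implicit Arguments.

Theorem lemma5p7 (T : realType) :
  exists c : T, 0 < c /\
  exists N0 : nat, forall N : nat, (N0 <= N)%N ->
  forall (n : nat) (mu : {ffun 'I_(N - 3) -> T}),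
    (forall x, 0 <= mu x) -> \sum_x mu x = 1 ->
    @prob_tau0_gt T N n mu <= expR (1 - c * n%:R / (N%:R ^+ 3)).
Proof.
exists 1; split; first exact: ltr01.
exists 0%N => N _ n mu mu0 mu1.
(* A probability law on 'I_(N-3) forces the state space, hence N, to be nonempty. *)
have N0 : 0 < N%:R :> T.
  case: (posnP (N - 3)) => [noS|]; last by rewrite ltr0n; lia.
  have := oner_neq0 T; rewrite -mu1 big1 ?eqxx // => x _.
  by have := ltn_ord x; lia.
have decay : @prob_tau0_gt T N n mu <= 2 * lam T N ^+ n.
  rewrite -(ler_pM2l N0); apply: le_trans (prob_tau0_gt_le n mu0) _.
  have -> : N%:R * (2 * lam T N ^+ n) = lam T N ^+ n * (2 * N%:R) by ring.
  rewrite ler_wpM2l ?exprn_ge0 ?lam_ge0 //.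
  exact: lyap_mean_le.
apply: le_trans decay _.
have -> : 1 * n%:R / N%:R ^+ 3 = n%:R * (1 / N%:R ^+ 3) :> T by ring.
apply: geometric_le_expR.
have K1 : 1 <= N%:R ^+ 3 :> T by rewrite -natrX ler1n expn_gt0 -(ltr0n T) N0.
by rewrite divr_ge0 ?ler01 ?exprn_ge0 ?ler0n //= ler_pdivrMr ?mul1r //; lra.
Qed.
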